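(* Let $R$ be an indecomposable commutative unital ring, $X$ a locally compact Hausdorff zero-dimensional space, and $S$ an inverse semigroup. If $\alpha=(\{D_s\}_{s\in S},\{\alpha_s\}_{s\in S})$ is an algebraic partial action of $S$ on $A_R(X)$ such that each ideal $D_s$ has local units, then there is a topological partial action $\theta=(\{X_s\}_{s\in S},\{\theta_s\}_{s\in S})$ of $S$ on $X$ such that $\alpha$ is the dual partial action of $\theta$.
   Context: $A_R(X)$ is the $R$-algebra of locally constant compactly supported functions $X\to R$ with pointwise operations. $R$ is indecomposable if its only idempotents are $0,1$. A ring has local units if every finite subset $F$ admits an idempotent $e$ with $r=er=re$ for $r\in F$. Inverse semigroups: $E(S)$ idempotents, $s\le t$ iff $s=ts^*s$; $\mathcal{I}(Z)$ is the inverse semigroup of partial bijections of a set $Z$; a partial homomorphism $\varphi$ satisfies $\varphi(s^* )=\varphi(s)^*$, $\varphi(s)\varphi(t)\le\varphi(st)$, $s\le t\Rightarrow\varphi(s)\le\varphi(t)$. An algebraic partial action of $S$ on an $R$-algebra $A$: ideals $D_s$, $R$-algebra isomorphisms $\alpha_s:D_{s^*}\to D_s$, $s\mapsto\alpha_s$ a partial homomorphism $S\to\mathcal{I}(A)$, and $A=\operatorname{span}_R\bigcup_{e\in E(S)}D_e$. A topological partial action of $S$ on $X$: open $X_s$, homeomorphisms $\theta_s:X_{s^*}\to X_s$, $s\mapsto\theta_s$ a partial homomorphism $S\to\mathcal{I}(X)$, $X=\bigcup_{e\in E(S)}X_e$. Its dual partial action on $A_R(X)$: $D_s=\{f:\operatorname{supp}f\subseteq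 X_s\}$, $\alpha_s(f)=f\circ\theta_{s^*}$ on $X_s$, extended by zero. *)

From HB Require Import structures.
From mathcomp Require Import all_boot all_order all_algebra.
From mathcomp Require Import all_classical all_reals topology.
Set Implicit Arguments.
Unset Strict Implicit.
Unset Printing Implicit Defensive.
Import Order.TTheory GRing.Theory.
Local Open Scope classical_set_scope.
Local Open Scope ring_scope.

Record inverse_semigroup := InverseSemigroup {
  is_carrier :> Type;
  imul : is_carrier -> is_carrier -> is_carrier;
  istar : is_carrier -> is_carrier;
  imulA : forall a b c, imul a (imul b c) = imul (imul a b) c;
  istar_inv1 : forall s, imul (imul s (istar s)) s = s;
  istar_inv2 : forall s, imul (imul (istar s) s) (istar s) = istar s;
  istar_uniq : forall s t, imul (imul s t) s = s -> imul (imul t s) t = t ->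
                 t = istar s
}.

Definition idempotent (S : inverse_semigroup) (e : S) := imul e e = e.

Definition is_le (S : inverse_semigroup) (s t : S) :=
  s = imul (imul t (istar s)) s.

(* A family s |-> phi s of partial bijections of Z, where phi s is given by
   a total function f s : Z -> Z restricted to the domain dom (s^star), with
   range dom s.  The three axioms of a partial homomorphism S -> I(Z):
   phi(s^star) = phi(s)^star, phi(s)phi(t) <= phi(st), s <= t -> phi(s) <= phi(t),
   together with the fact that phi(s) is a bijection dom(s^star) -> dom(s). *)
Definition partial_hom (S : inverse_semigroup) (Z : Type)
    (dom : S -> set Z) (f : S -> Z -> Z) : Prop :=
  [/\
      (forall s x, dom (istar s) x -> dom s (f s x)),
      (forall s x, dom (istar s) x -> f (istar s) (f s x) = x),
      (forall s y, dom s y -> dom (istar s) (f (istar s) y) /\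
                              f s (f (istar s) y) = y),
      (forall s t x, dom (istar t) x -> dom (istar s) (f t x) ->
          dom (istar (imul s t)) x /\ f (imul s t) x = f s (f t x)) &
      (forall s t, is_le s t ->
          (dom (istar s) `<=` dom (istar t)) /\
          (forall x, dom (istar s) x -> f s x = f t x))].

Definition locally_compact_space (X : topologicalType) : Prop :=
  forall x : X, exists K : set X, compact K /\ nbhs x K.

Definition zero_dim (X : topologicalType) : Prop :=
  forall (x : X) (U : set X), open U -> U x ->
    exists V : set X, [/\ clopen V, V x & V `<=` U].

Definition fsupp (X : Type) (R : pzRingType) (f : X -> R) : set X :=
  [set x | f x != 0].

Definition locally_constant (X : topologicalType) (T : Type) (f : X -> T) :=
  forall x : X, exists U : set X, [/\ open U, U x & forall y, U y -> f y = f x].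

Definition in_ARX (X : topologicalType) (R : pzRingType) (f : X -> R) : Prop :=
  locally_constant f /\ compact (closure (fsupp f)).

Definition indecomposable (R : pzRingType) : Prop :=
  forall r : R, r * r = r -> r = 0 \/ r = 1.

Definition is_ideal (X : topologicalType) (R : comNzRingType) (I : set (X -> R)) :=
  I `<=` @in_ARX X R /\
  [/\ I (fun _ => 0),
      (forall f g, I f -> I g -> I (fun x => f x + g x)),
      (forall f, I f -> I (fun x => - f x)),
      (forall r f, I f -> I (fun x => r * f x)) &
      (forall f g, I f -> in_ARX g -> I (fun x => f x * g x) /\ I (fun x => g x * f x))].

Definition has_local_units (X : Type) (R : pzRingType) (I : set (X -> R)) :=
  forall F : seq (X -> R), (forall r, r \in F -> I r) ->
    exists e, [/\ I e, (fun x => e x * e x) = e &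
       forall r, r \in F -> (fun x => e x * r x) = r /\ (fun x => r x * e x) = r].

Definition alg_hom_on (X : Type) (R : pzRingType) (D : set (X -> R))
    (a : (X -> R) -> (X -> R)) :=
  [/\ (forall f g, D f -> D g -> a (fun x => f x + g x) = (fun x => a f x + a g x)),
      (forall f g, D f -> D g -> a (fun x => f x * g x) = (fun x => a f x * a g x)) &
      (forall r f, D f -> a (fun x => r * f x) = (fun x => r * a f x))].

Definition alg_partial_action (S : inverse_semigroup) (X : topologicalType)
    (R : comNzRingType) (D : S -> set (X -> R)) (a : S -> (X -> R) -> (X -> R)) :=
  [/\ (forall s, is_ideal (D s)),
      (forall s, alg_hom_on (D (istar s)) (a s)),
      partial_hom D a &
      (forall f, in_ARX f -> exists n (c : 'I_n -> R) (g : 'I_n -> X -> R)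
                                    (e : 'I_n -> S),
          (forall i, idempotent (e i) /\ D (e i) (g i)) /\
          f = (fun x => \sum_(i < n) c i * g i x))].

Definition top_partial_action (S : inverse_semigroup) (X : topologicalType)
    (U : S -> set X) (th : S -> X -> X) :=
  [/\ (forall s, open (U s)),
      (forall s, {within U (istar s), continuous (th s)}),
      partial_hom U th &
      (forall x : X, exists e : S, idempotent e /\ U e x)].

Definition dual_dom (S : inverse_semigroup) (X : topologicalType) (R : pzRingType)
    (U : S -> set X) (s : S) : set (X -> R) :=
  [set f | in_ARX f /\ fsupp f `<=` U s].

Definition dual_map (S : inverse_semigroup) (X : topologicalType) (R : pzRingType)
    (U : S -> set X) (th : S -> X -> X) (s : S) (f : X -> R) : X -> R :=
  fun x => if `[< U s x >] then f (th (istar s) x) else 0.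

From Pilot Require Import Defs.
From HB Require Import structures.
From mathcomp Require Import all_boot all_order all_algebra.
From mathcomp Require Import all_classical all_reals topology numfun.
Local Open Scope classical_set_scope.
Local Open Scope ring_scope.
Import GRing.Theory.

(* An ideal [D s] of A_R(X) with local units consists exactly of the functions of
   A_R(X) supported in the open set [theta_dom s] where some element of [D s] does
   not vanish: a compact support is covered by finitely many such supports, and a
   local unit for the covering functions is an idempotent, hence an indicator
   function, since R is indecomposable.  For the same reason a nonzero
   multiplicative R-linear functional on [D s] takes only the values 0 and 1 on
   indicators of compact-open sets; those sent to 1 form a filtered family of
   compact sets, whose common point y makes the functional evaluation at y.
   Applied to [g |-> a (istar s) g x] for x in [theta_dom (istar s)], this defines
   [theta s x].  Indicators of compact-open sets separate the points of X, so the
   partial-action axioms, continuity and duality of theta are read off from those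
   of alpha by testing on indicators. *)

Lemma istarK (S : inverse_semigroup) (s : S) : istar (istar s) = s.
Proof. by symmetry; apply: istar_uniq; [exact: istar_inv2 | exact: istar_inv1]. Qed.

Section Compactness.
Context {T : topologicalType}.

Lemma compact_directed_meet (K : set T) (P : set (set T)) :
  compact K -> P !=set0 ->
  (forall A B, P A -> P B -> exists2 C, P C & K `&` C `<=` A `&` B) ->
  (forall A, P A -> closed A /\ K `&` A !=set0) ->
  exists2 x, K x & forall A, P A -> A x.
Proof.
move=> cK [A0 PA0] dirP clP.
pose F := filter_from P (fun A => K `&` A).
have FF : ProperFilter F.
  apply: filter_from_proper; last by move=> A /clP[].
  apply: filter_from_filter; first by exists A0.
  move=> A B PA PB; have [C PC sC] := dirP A B PA PB.
  by exists C => // x [Kx /(conj Kx)/sC[Ax Bx]].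
have [|x [Kx clx]] := cK F FF; first by exists A0 => // x [].
exists x => // A PA; apply: (clP A PA).1 => B xB.
have FA : F (K `&` A) by exists A.
by have [y [[_ Ay] By]] := clx _ _ FA xB; exists y.
Qed.

Lemma compact_seq_subcover (I : eqType) (K : set T) (D : set I) (f : I -> set T) :
  compact K -> (forall i, D i -> open (f i)) -> K `<=` \bigcup_(i in D) f i ->
  exists2 s : seq I, (forall i, i \in s -> D i) &
    K `<=` \bigcup_(i in [set` s]) f i.
Proof.
move=> cK fo Kf; apply: contrapT => nocover.
pose P := [set ~` \bigcup_(i in [set` s]) f i
            | s in [set s : seq I | forall i, i \in s -> D i]].
have [|||x Kx Px] := @compact_directed_meet K P cK.
- by exists (~` \bigcup_(i in [set` [::]]) f i); exists [::].
- move=> _ _ [s Ds <-] [t Dt <-]; exists (~` \bigcup_(i in [set` (s ++ t)]) f i).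
    by exists (s ++ t) => // i; rewrite mem_cat => /orP[/Ds|/Dt].
  move=> x [_ nst]; split => -[i si fx]; apply: nst.
    by exists i; rewrite //= mem_cat si.
  by exists i; rewrite //= mem_cat si orbT.
- move=> _ [s Ds <-]; split.
    by apply: open_closedC; apply: bigcup_open => i /= /Ds /fo.
  apply: contrapT => /set0P/negP; rewrite negbK => /eqP K0.
  apply: nocover; exists s => // x Kx; apply: contrapT => nx.
  by have : (K `&` ~` \bigcup_(i in [set` s]) f i) x by []; rewrite K0.
have [i Di fx] := Kf x Kx.
have Pi : P (~` \bigcup_(j in [set` [:: i]]) f j).
  by exists [:: i] => // j; rewrite mem_seq1 => /eqP ->.
by apply: Px Pi _; exists i; rewrite /= ?mem_seq1.
Qed.
End Compactness.

Section Indicator.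
Context {T : Type} {R : nzRingType}.
Implicit Types (L : set T) (x : T).

Lemma indic_in L x : L x -> \1_L x = 1 :> R.
Proof. by move=> Lx; rewrite indicE mem_set. Qed.

Lemma indic_out L x : ~ L x -> \1_L x = 0 :> R.
Proof. by move=> Lx; rewrite indicE memNset. Qed.

Lemma indic_eq1 {L x} : \1_L x = 1 :> R -> L x.
Proof.
by apply: contraPP => nLx; rewrite indic_out // => /eqP; rewrite eq_sym oner_eq0.
Qed.

Lemma fsupp_indic L : fsupp (\1_L : T -> R) = L.
Proof.
apply/seteqP; split => x; rewrite /fsupp /=.
  by apply: contraPP => Lx; rewrite indic_out ?eqxx.
by move=> Lx; rewrite indic_in ?oner_eq0.
Qed.

Lemma indic_setIC K L :
  \1_K = (fun x => \1_(K `&` L) x + \1_(K `&` ~` L) x) :> (T -> R).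
Proof.
apply/funext => x; have [Kx|nKx] := pselect (K x); last first.
  by rewrite !indic_out ?addr0 // => -[].
have [Lx|nLx] := pselect (L x).
  by rewrite [\1_(_ `&` ~` _) x]indic_out ?addr0 ?indic_in // => -[].
by rewrite [\1_(_ `&` L) x]indic_out ?add0r ?indic_in // => -[].
Qed.

Lemma idempotent_funE {e : T -> R} : indecomposable R ->
  (fun x => e x * e x) = e -> e = \1_(fsupp e).
Proof.
move=> Rind ee; apply/funext => x.
have [ex0|ex1] := Rind (e x) (congr1 (fun h => h x) ee).
  by rewrite ex0 indic_out // /fsupp /= ex0 eqxx.
by rewrite ex1 indic_in // /fsupp /= ex1 oner_eq0.
Qed.

End Indicator.

Definition compact_open_set {X : topologicalType} (L : set X) := compact L /\ open L.

Section LocallyConstant.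
Context {X : topologicalType} {T : Type}.

Lemma locally_constant_open_preimage (f : X -> T) (P : set T) :
  locally_constant f -> open (f @^-1` P).
Proof.
move=> lcf; rewrite openE => x Px; have [U [oU Ux fU]] := lcf x.
by apply: (@filterS _ _ _ U); [move=> y /fU /= -> | exact: open_nbhs_nbhs].
Qed.

Lemma locally_constant_closed_preimage (f : X -> T) (P : set T) :
  locally_constant f -> closed (f @^-1` P).
Proof.
move=> lcf; rewrite -[P]setCK -preimage_setC.
exact/open_closedC/locally_constant_open_preimage.
Qed.

End LocallyConstant.

Section CompactOpen.
Context {R : nzRingType} {X : topologicalType}.
Hypothesis hX : hausdorff_space X.
Implicit Types (L M W : set X) (f : X -> R).

Lemma fsupp_open f : locally_constant f -> open (fsupp f).
Proof. exact: (@locally_constant_open_preimage X R f [set r : R | r != 0]). Qed.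

Lemma fsupp_closed f : locally_constant f -> closed (fsupp f).
Proof. exact: (@locally_constant_closed_preimage X R f [set r : R | r != 0]). Qed.

Lemma compact_open_fsupp {f} : in_ARX f -> compact_open_set (fsupp f).
Proof.
move=> [lcf cf]; split; last exact: fsupp_open.
by rewrite (closure_id (fsupp f)).1 //; exact: fsupp_closed.
Qed.

Lemma compact_openI {L M} : compact_open_set L -> closed M -> open M ->
  compact_open_set (L `&` M).
Proof.
move=> [cL oL] cM oM; split; last exact: openI.
exact: subclosed_compact (closedI (compact_closed hX cL) cM) cL (@subIsetl _ L M).
Qed.

Lemma indic_in_ARX {L} : compact_open_set L -> in_ARX (\1_L : X -> R).
Proof.
move=> [cL oL]; split; last first.
  by rewrite fsupp_indic -(closure_id L).1 //; exact: compact_closed hX cL.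
move=> x; have [Lx|nLx] := pselect (L x).
  by exists L; split => // y Ly; rewrite !indic_in.
exists (~` L); split => //; first exact/closed_openC/(compact_closed hX cL).
by move=> y nLy; rewrite !indic_out.
Qed.

Hypotheses (lcX : locally_compact_space X) (zdX : zero_dim X).

Lemma compact_open_nbhs_basis {x W} : open W -> W x ->
  exists L, [/\ compact_open_set L, L x & L `<=` W].
Proof.
move=> oW Wx; have [K [cK]] := lcX x; rewrite nbhsE => -[O [oO Ox] OK].
have [V [[oV clV] Vx VWO]] := zdX x (W `&` O) (openI oW oO) (conj Wx Ox).
exists V; split => //; last by move=> y /VWO[].
split => //; apply: subclosed_compact clV cK _ => y /VWO[_ /OK].
by [].
Qed.

Lemma eq_of_compact_open_nbhs {x z W} : open W -> W x ->
  (forall L, compact_open_set L -> L `<=` W -> L x -> L z) -> x = z.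
Proof.
move=> oW Wx Lxz; apply: contrapT => /eqP xz.
have [A [oA /set_mem Ax /set_mem nAz]] := hausdorff_accessible hX xz.
have [L [cL Lx LAW]] := compact_open_nbhs_basis (openI oA oW) (conj Ax Wx).
have LW : L `<=` W by move=> y /LAW[].
by apply: nAz; have [] := LAW z (Lxz L cL LW Lx).
Qed.

End CompactOpen.

Definition ideal_support {X : Type} {R : pzRingType} (I : set (X -> R)) : set X :=
  [set x | exists2 g, I g & g x != 0].

Lemma subset_ideal_support {X : Type} {R : pzRingType} (I J : set (X -> R)) :
  I `<=` J -> ideal_support I `<=` ideal_support J.
Proof. by move=> IJ x [g Ig gx]; exists g => //; exact: IJ. Qed.

Section Ideal.
Context {R : comNzRingType} {X : topologicalType} {I : set (X -> R)}.
Hypothesis hI : is_ideal I.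

Lemma ideal_in_ARX {f} : I f -> in_ARX f.
Proof. exact: hI.1. Qed.

Lemma ideal_mul_ARX {f g} : I f -> in_ARX g -> I (fun x => f x * g x).
Proof. by case: hI => _ [_ _ _ _ h] If Ag; exact: (h f g If Ag).1. Qed.

Lemma ARX_mul_ideal {f g} : I f -> in_ARX g -> I (fun x => g x * f x).
Proof. by case: hI => _ [_ _ _ _ h] If Ag; exact: (h f g If Ag).2. Qed.

Lemma open_ideal_support : open (ideal_support I).
Proof.
have -> : ideal_support I = \bigcup_(g in I) fsupp g.
  by apply/seteqP; split => x [g Ig gx]; exists g.
by apply: bigcup_open => g /ideal_in_ARX [/fsupp_open].
Qed.

Hypotheses (Rind : indecomposable R) (hlu : has_local_units I).

Lemma ideal_supportE : I = [set f | in_ARX f /\ fsupp f `<=` ideal_support I].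
Proof.
apply/seteqP; split => f /=; first by move=> If; split; [exact: ideal_in_ARX | exists f].
move=> [Af fI]; have [cf _] := compact_open_fsupp Af.
have [gs Igs fgs] : exists2 gs : seq (X -> R), (forall g, g \in gs -> I g) &
    fsupp f `<=` \bigcup_(g in [set` gs]) fsupp g.
  apply: compact_seq_subcover cf _ _ => [g /ideal_in_ARX [/fsupp_open]//|x /fI].
  by move=> [g Ig gx]; exists g.
have [e [Ie ee eu]] := hlu gs Igs.
suff -> : f = (fun x => e x * f x) by exact: ideal_mul_ARX.
apply/funext => x; have [fx0|fx] := eqVneq (f x) 0; first by rewrite fx0 mulr0.
have [g /= gs_g gx] := fgs x fx.
rewrite (idempotent_funE Rind ee) indic_in ?mul1r //.
move: gx; apply: contra_neq => ex0.
by rewrite -(eu g gs_g).1 ex0 mul0r.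
Qed.

Hypothesis hX : hausdorff_space X.

Lemma indic_in_ideal L : compact_open_set L -> L `<=` ideal_support I -> I \1_L.
Proof.
by move=> cL LI; rewrite ideal_supportE; split; [exact: indic_in_ARX | rewrite fsupp_indic].
Qed.

End Ideal.

Section Character.
Context {R : comNzRingType} {X : topologicalType} {I : set (X -> R)}.
Hypotheses (hI : is_ideal I) (Rind : indecomposable R) (hlu : has_local_units I)
  (hX : hausdorff_space X) (lcX : locally_compact_space X) (zdX : zero_dim X).
Variable chi : (X -> R) -> R.
Hypotheses
  (chiD : forall f g, I f -> I g -> chi (fun x => f x + g x) = chi f + chi g)
  (chiM : forall f g, I f -> I g -> chi (fun x => f x * g x) = chi f * chi g)
  (chiZ : forall r f, I f -> chi (fun x => r * f x) = r * chi f)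
  (chi_neq0 : exists2 g, I g & chi g != 0).

Local Notation supp := (ideal_support I).

Let indic_in_I L : compact_open_set L -> L `<=` supp -> I \1_L.
Proof. exact: indic_in_ideal. Qed.

Lemma chi_indicM {L M} : compact_open_set L -> L `<=` supp ->
  compact_open_set M -> M `<=` supp -> chi \1_(L `&` M) = chi \1_L * chi \1_M.
Proof. by move=> cL LI cM MI; rewrite indicI -chiM //; exact: indic_in_I. Qed.

Lemma chi_indic01 {L} : compact_open_set L -> L `<=` supp ->
  chi \1_L = 0 \/ chi \1_L = 1.
Proof. by move=> cL LI; apply: Rind; rewrite -chi_indicM // setIid. Qed.

Lemma chi_indic_unit : exists2 K, compact_open_set K /\ K `<=` supp & chi \1_K = 1.
Proof.
have [g Ig chig] := chi_neq0.
have [|e [Ie ee eg]] := hlu [:: g]; first by move=> h; rewrite mem_seq1 => /eqP ->.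
have eE := idempotent_funE Rind ee.
exists (fsupp e).
  by split; [exact: compact_open_fsupp (ideal_in_ARX hI Ie) | exists e].
rewrite -eE; have [chie0|//] : chi e = 0 \/ chi e = 1 by apply: Rind; rewrite -chiM // ee.
by move: chig; rewrite -(eg g (mem_head _ _)).1 chiM // chie0 mul0r eqxx.
Qed.

Lemma chi_indic_neq0 {A} : compact_open_set A -> A `<=` supp -> chi \1_A = 1 ->
  A !=set0.
Proof.
move=> cA AI; apply: contraPP => /set0P/negP; rewrite negbK => /eqP A0.
have -> : \1_A = (fun x => 0 * \1_A x) :> (X -> R).
  by apply/funext => x; rewrite mul0r A0 indic0.
by rewrite chiZ ?mul0r; [move/eqP; rewrite eq_sym oner_eq0 | exact: indic_in_I].
Qed.

Lemma chi_indic_meet {K} : compact_open_set K -> K `<=` supp -> chi \1_K = 1 ->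
  exists2 y, K y &
    forall L, [/\ compact_open_set L, L `<=` K & chi \1_L = 1] -> L y.
Proof.
move=> cK KI chiK; apply: compact_directed_meet cK.1 _ _ _; first by exists K; split.
- move=> A B [cA AK chiA] [cB BK chiB]; exists (A `&` B); last by move=> x [].
  have AI : A `<=` supp by move=> x /AK /KI.
  have BI : B `<=` supp by move=> x /BK /KI.
  split; first exact: (compact_openI hX cA (compact_closed hX cB.1) cB.2).
    by move=> x [/AK].
  by rewrite chi_indicM ?chiA ?chiB ?mulr1.
- move=> A [cA AK chiA]; split; first exact: compact_closed hX cA.1.
  by rewrite setIidr //; apply: chi_indic_neq0 => // x /AK /KI.
Qed.

Lemma chi_indic_point : exists2 y, supp y &
  forall L, compact_open_set L -> L `<=` supp -> L y -> chi \1_L = 1.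
Proof.
have [K [cK KI] chiK] := chi_indic_unit.
have [y Ky Py] := chi_indic_meet cK KI chiK.
exists y; first exact: KI.
move=> L cL LI Ly; have [chiL0|//] := chi_indic01 cL LI.
(* Otherwise the indicator of [K `\` L] is sent to 1, which puts [y] outside [L]. *)
have cKL : compact_open_set (K `&` L).
  exact: (compact_openI hX cK (compact_closed hX cL.1) cL.2).
have cKnL : compact_open_set (K `&` ~` L).
  exact: (compact_openI hX cK (open_closedC cL.2)
    (closed_openC (compact_closed hX cL.1))).
have KLI : K `&` L `<=` supp by move=> x [/KI].
have KnLI : K `&` ~` L `<=` supp by move=> x [/KI].
have chiKnL : chi \1_(K `&` ~` L) = 1.
  move: chiK; rewrite (indic_setIC K L) chiD; try exact: indic_in_I.
  by rewrite [chi \1_(K `&` L)]chi_indicM // chiL0 mulr0 add0r.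
by have [] := Py (K `&` ~` L) (And3 cKnL (@subIsetl _ K _) chiKnL).
Qed.

Lemma character_evaluation : exists y, supp y /\ forall g, I g -> chi g = g y.
Proof.
have [y Iy chi_y] := chi_indic_point; exists y; split => // g Ig.
have lcg : locally_constant g by case: (ideal_in_ARX hI Ig).
have [L [cL Ly LI]] := compact_open_nbhs_basis lcX zdX (open_ideal_support hI) Iy.
pose M := L `&` g @^-1` [set g y].
have cM : compact_open_set M.
  exact: (compact_openI hX cL (@locally_constant_closed_preimage _ _ g [set g y] lcg)
    (@locally_constant_open_preimage _ _ g [set g y] lcg)).
have MI : M `<=` supp by move=> x [/LI].
have chiM1 : chi \1_M = 1 by apply: chi_y => //; split.
have gM : (fun x => g x * \1_M x) = (fun x => g y * \1_M x).
  apply/funext => x; have [[_ ->]|nMx] := pselect (M x); first by [].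
  by rewrite indic_out // !mulr0.
by have := congr1 chi gM; rewrite chiM ?chiZ ?chiM1 ?mulr1 //; exact: indic_in_I.
Qed.

End Character.

Section DualAction.
Context {R : comNzRingType} {X : topologicalType} {S : inverse_semigroup}.
Variables (D : S -> set (X -> R)) (a : S -> (X -> R) -> (X -> R)).
Hypotheses (Rind : indecomposable R) (lcX : locally_compact_space X)
  (hX : hausdorff_space X) (zdX : zero_dim X)
  (alpha : alg_partial_action D a) (hlu : forall s, has_local_units (D s)).

Let ideal_D s : is_ideal (D s). Proof. by case: alpha. Qed.
Let act_hom s : alg_hom_on (D (istar s)) (a s). Proof. by case: alpha. Qed.

Let act_dom {s f} : D (istar s) f -> D s (a s f).
Proof. by case: alpha => _ _ [h _ _ _ _] _; exact: h. Qed.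
Let actK {s f} : D (istar s) f -> a (istar s) (a s f) = f.
Proof. by case: alpha => _ _ [_ h _ _ _] _; exact: h. Qed.
Let actKV {s f} : D s f -> a s (a (istar s) f) = f.
Proof. by move=> Df; rewrite -{1}[s]istarK actK // istarK. Qed.
Let act_mul {s t f} : D (istar t) f -> D (istar s) (a t f) ->
  D (istar (imul s t)) f /\ a (imul s t) f = a s (a t f).
Proof. by case: alpha => _ _ [_ _ _ h _] _; exact: h. Qed.
Let act_le {s t} : is_le s t ->
  D (istar s) `<=` D (istar t) /\ forall f, D (istar s) f -> a s f = a t f.
Proof. by case: alpha => _ _ [_ _ _ _ h] _; exact: h. Qed.
Let act_dom_star {s f} : D s f -> D (istar s) (a (istar s) f).
Proof. by move=> Df; apply: act_dom; rewrite istarK. Qed.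

Definition theta_dom s : set X := ideal_support (D s).

(* The point representing [g |-> a (istar s) g x] on [D s] (see [theta_spec]);
   outside [theta_dom (istar s)] the value is the junk default [x]. *)
Definition theta s (x : X) : X :=
  xget x [set y | theta_dom s y /\ forall g, D s g -> a (istar s) g x = g y].

Let open_theta_dom s : open (theta_dom s).
Proof. exact: open_ideal_support. Qed.

Let indic_in_D {s L} : compact_open_set L -> L `<=` theta_dom s -> D s \1_L.
Proof. exact: indic_in_ideal. Qed.

Lemma theta_spec {s x} : theta_dom (istar s) x ->
  theta_dom s (theta s x) /\ forall g, D s g -> a (istar s) g x = g (theta s x).
Proof.
move=> [h Dh hx]; have [hD hM hZ] := act_hom (istar s); rewrite istarK in hD hM hZ.
suff ex : exists y, theta_dom s y /\ forall g, D s g -> a (istar s) g x = g y.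
  by have := xgetPex x ex.
apply: (character_evaluation (ideal_D s) Rind (hlu s) hX lcX zdX
  (fun g => a (istar s) g x)).
- by move=> f g Df Dg; rewrite hD.
- by move=> f g Df Dg; rewrite hM.
- by move=> r f Df; rewrite hZ.
- by exists (a s h); [exact: act_dom | rewrite actK].
Qed.

Lemma act_eval {s w f} : theta_dom s w -> D (istar s) f ->
  a s f w = f (theta (istar s) w).
Proof.
move=> sw Df; have := @theta_spec (istar s) w; rewrite istarK => /(_ sw)[_].
by apply.
Qed.

Lemma eq_of_eval {u x z} : theta_dom u x -> (forall g, D u g -> g x = g z) -> x = z.
Proof.
move=> ux gxz; apply: (eq_of_compact_open_nbhs hX lcX zdX (open_theta_dom u) ux).
move=> L cL Lu Lx; have := gxz _ (indic_in_D cL Lu).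
by rewrite indic_in // => /esym; exact: indic_eq1.
Qed.

Lemma thetaK {s x} : theta_dom (istar s) x -> theta (istar s) (theta s x) = x.
Proof.
move=> sx; have [sy ev] := theta_spec sx.
apply/esym/(eq_of_eval sx) => f Df.
by rewrite -{1}(actK Df) ev ?act_eval //; exact: act_dom.
Qed.

(* The witness is [a (istar t) (h * \1_L)] for a compact-open neighbourhood [L]
   of [theta t x] inside [theta_dom t `&` theta_dom (istar s)]. *)
Lemma theta_mul_witness {s t x h} :
  theta_dom (istar t) x -> theta_dom (istar s) (theta t x) -> D (istar s) h ->
  exists f, [/\ D (istar (imul s t)) f, f x = h (theta t x) &
    forall w, a s h w = 0 -> a (imul s t) f w = 0].
Proof.
move=> tx stx Dh; have [ty evt] := theta_spec tx.
have [L [cL Ly LI]] := compact_open_nbhs_basis lcX zdX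
  (openI (open_theta_dom t) (open_theta_dom (istar s))) (conj ty stx).
have DtL : D t \1_L by apply: indic_in_D cL _ => y /LI[].
have DsL : D (istar s) \1_L by apply: indic_in_D cL _ => y /LI[].
pose p := fun y => h y * \1_L y.
have Dsp : D (istar s) p := ideal_mul_ARX (ideal_D _) Dh (ideal_in_ARX (ideal_D _) DtL).
have Dtp : D t p := ARX_mul_ideal (ideal_D _) DtL (ideal_in_ARX (ideal_D _) Dh).
exists (a (istar t) p).
have [Dstf ->] := act_mul (act_dom_star Dtp) (eq_ind_r (D (istar s)) Dsp (actKV Dtp)).
split => //; first by rewrite evt // /p indic_in // mulr1.
have [_ hM _] := act_hom s.
by move=> w hw0; rewrite actKV // hM //= hw0 mul0r.
Qed.

Lemma theta_dom_mul {s t x} :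
  theta_dom (istar t) x -> theta_dom (istar s) (theta t x) ->
  theta_dom (istar (imul s t)) x.
Proof.
move=> tx stx; have [h Dh hy] := stx.
have [f [Df fx _]] := theta_mul_witness tx stx Dh.
by exists f; rewrite ?fx.
Qed.

Lemma theta_mul {s t x} :
  theta_dom (istar t) x -> theta_dom (istar s) (theta t x) ->
  theta (imul s t) x = theta s (theta t x).
Proof.
move=> tx stx; have stx' := theta_dom_mul tx stx.
have [sz evs] := theta_spec stx; have [stw _] := theta_spec stx'.
apply/esym/(eq_of_compact_open_nbhs hX lcX zdX (open_theta_dom s) sz) => L cL Ls Lz.
have DL := indic_in_D cL Ls.
have [f [Df fx hf]] := theta_mul_witness tx stx (act_dom_star DL).
apply: contrapT => nLw.
have : a (imul s t) f (theta (imul s t) x) = 1.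
  by rewrite (act_eval stw Df) (thetaK stx') fx evs // indic_in.
by rewrite hf ?(actKV DL) ?indic_out // => /eqP; rewrite eq_sym oner_eq0.
Qed.

Lemma theta_dom_le {s t} : is_le s t -> theta_dom (istar s) `<=` theta_dom (istar t).
Proof. by move=> /act_le[st _]; exact: subset_ideal_support. Qed.

Lemma theta_le {s t x} : is_le s t -> theta_dom (istar s) x -> theta s x = theta t x.
Proof.
move=> le sx; have [st eq_st] := act_le le; have tx := theta_dom_le le x sx.
have [sy _] := theta_spec sx; have [ty _] := theta_spec tx.
apply: (eq_of_eval sy) => g Dg; have Df := act_dom_star Dg.
rewrite -(actKV Dg) {2}(eq_st _ Df) (act_eval sy Df) (thetaK sx).
by rewrite (act_eval ty (st _ Df)) (thetaK tx).
Qed.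

Lemma theta_continuous s : {within theta_dom (istar s), continuous (theta s)}.
Proof.
rewrite continuous_open_subspace; last exact: open_theta_dom.
move=> x /set_mem sx B; have [sy evs] := theta_spec sx.
rewrite nbhsE => -[O [oO Oy] OB].
have [L [cL Ly LO]] := compact_open_nbhs_basis lcX zdX
  (openI oO (open_theta_dom s)) (conj Oy sy).
have Ls : L `<=` theta_dom s by move=> w /LO[].
have DL := indic_in_D cL Ls.
have [N [oN Nx hN]] := (ideal_in_ARX (ideal_D _) (act_dom_star DL)).1 x.
rewrite nbhsE; exists (N `&` theta_dom (istar s)).
  by split; [exact: openI | split].
move=> z [Nz sz]; apply/OB; have [_ evz] := theta_spec sz.
have Lz : \1_L (theta s z) = 1 :> R by rewrite -evz // hN // evs // indic_in.
by have [] := LO _ (indic_eq1 Lz).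
Qed.

Lemma theta_dom_cover x : exists e : S, Defs.idempotent e /\ theta_dom e x.
Proof.
have [L [cL Lx _]] := compact_open_nbhs_basis lcX zdX openT (Logic.I : setT x).
have [_ _ _ span] := alpha.
have [n [c [g [e [ge gE]]]]] := span _ (indic_in_ARX hX cL).
apply: contrapT => nex.
have := congr1 (fun f => f x) gE; rewrite /= indic_in // big1 => [/eqP|i _].
  by rewrite oner_eq0.
have [ide Dg] := ge i; have [->|gx] := eqVneq (g i x) 0; first by rewrite mulr0.
by case: nex; exists (e i); split => //; exists (g i).
Qed.

Lemma theta_partial_hom : partial_hom theta_dom theta.
Proof.
split.
- by move=> s x /theta_spec[].
- by move=> s x; exact: thetaK.
- move=> s y; rewrite -{1}[s]istarK => sy; split; first by have [] := theta_spec sy.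
  by have := thetaK sy; rewrite istarK.
- by move=> s t x tx stx; split; [exact: theta_dom_mul | exact: theta_mul].
- by move=> s t le; split; [exact: theta_dom_le | move=> x; exact: theta_le].
Qed.

Lemma theta_top_partial_action : top_partial_action theta_dom theta.
Proof.
split; [exact: open_theta_dom | exact: theta_continuous | exact: theta_partial_hom |].
exact: theta_dom_cover.
Qed.

Lemma D_dual_dom s : D s = @dual_dom S X R theta_dom s.
Proof. exact: ideal_supportE (ideal_D s) Rind (hlu s). Qed.

Lemma act_dual_map s f : D (istar s) f -> a s f = dual_map theta_dom theta s f.
Proof.
move=> Df; apply/funext => w; rewrite /dual_map.
have [sw|nsw] := pselect (theta_dom s w); first by rewrite asboolT // act_eval.
rewrite asboolF //; apply: contrapT => /eqP fw; apply: nsw.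
by exists (a s f) => //; exact: act_dom.
Qed.

End DualAction.

Theorem proposition6p4 (R : comNzRingType) (X : topologicalType)
    (S : inverse_semigroup)
    (D : S -> set (X -> R)) (a : S -> (X -> R) -> (X -> R)) :
  indecomposable R ->
  locally_compact_space X -> hausdorff_space X -> zero_dim X ->
  alg_partial_action D a ->
  (forall s, has_local_units (D s)) ->
  exists (U : S -> set X) (th : S -> X -> X),
    top_partial_action U th /\
    (forall s, D s = @dual_dom S X R U s) /\
    (forall s f, D (istar s) f -> a s f = dual_map U th s f).
Proof.
move=> Rind lcX hX zdX alpha hlu.
exists (theta_dom D), (theta D a); split; last split.
- exact: theta_top_partial_action D a Rind lcX hX zdX alpha hlu.
- exact: D_dual_dom D a Rind alpha hlu.
- exact: act_dual_map D a Rind lcX hX zdX alpha hlu.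
Qed.
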